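(* For all formulas $\varphi,\psi,\vartheta$ and every program term $A$: (1) $(\neg\varphi)A\preceq\varphi\Rightarrow\psi$ and $A\psi\preceq\varphi\Rightarrow\psi$; in particular $\neg\varphi\preceq\varphi\Rightarrow\psi$, $\psi\preceq\varphi\Rightarrow\psi$, and the test $\varphi\to\psi$ satisfies $(\varphi\to\psi)\preceq\varphi\Rightarrow\psi$. (2) $\vartheta\preceq\varphi\Rightarrow\psi$ (with $\vartheta$ used as a test) iff $\vartheta\models\varphi\to\psi$; consequently, in every $\mathcal L$-model $M$, $$\to_{\varphi\Rightarrow\psi}=\to_{\varphi\to\psi}\cup\bigcup\{\to_A: A\in\tilde\Sigma^+,\ \forall w,w'\,(w\to_Aw'\text{ and }w\models^M\varphi\text{ imply }w'\models^M\psi)\},$$ where $\tilde\Sigma^+$ denotes finite nonempty compositions of elements of $\tilde\Sigma$.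
   Context: Fix countable, nonempty, pairwise disjoint sets $\mathrm{AtF}$ (atomic formulas), $\mathrm{AtP}$ (atomic programs) and $I$ (agent names). The formulas $\mathcal L_s$ and programs $\mathcal L_a$ of Type PDL ($\tau$PDL) are generated by $\varphi::=p\mid\neg\varphi\mid\forall A.\varphi\mid \mathsf C_\imath A$ and $A::=a\mid\varphi\mid\varphi\Rightarrow\varphi\mid AA\mid A+A\mid A^*$ with $p\in\mathrm{AtF}$, $a\in\mathrm{AtP}$, $\imath\in I$ (a formula used as a program is a test; $AB$ is sequential composition, $A+B$ choice, $\forall A.\varphi$ is the box $[A]\varphi$). Other connectives are abbreviations, e.g. $\varphi\to\psi:=\forall\varphi.\psi$. $\mathsf{tt}$ is a fixed tautology, $\mathsf{ff}=\neg\mathsf{tt}$, $\Omega:=\mathsf{tt}\Rightarrow\mathsf{tt}$, $\mathrm{AtP}_\Omega=\mathrm{AtP}\cup\{\Omega\}$. $\Sigma$ is the set of programs of the forms $a$, $\varphi$, $\varphi\Rightarrow\psi$; $\tilde\Sigma$ the set of programs of the forms $a$, $\varphi\Rightarrow\psi$; $\Sigma^+$ the finite nonempty sequential compositions of elements of $\Sigma$. An $\mathcal L$-model $M$ consists of a nonempty set $W$, a relation $\to_a\subseteq W\times W$ for each $a\in\mathrm{AtP}$, a valuation $\rho:\mathrm{AtF}\to2^W$, and for each $\imath\in I$, $w\in W$ a set $\imath^M(w)\subseteq\bigcup\{\to_A:A\in\Sigma^+\}$. Interpretation: $[\![p]\!]=\rho(p)$, $[\![\neg\varphi]\!]=W\setminus[\![\varphi]\!]$,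 $[\![\forall A.\varphi]\!]=\{w:\forall w'(w\to_Aw'\Rightarrow w'\in[\![\varphi]\!])\}$; $\to_\varphi=\{(w,w):w\in[\![\varphi]\!]\}$, $\to_{AB}=\to_A\circ\to_B$ (first $A$ then $B$), $\to_{A+B}=\to_A\cup\to_B$, $\to_{A^*}=\bigcup_{n\ge0}(\to_A)^n$, $\to_{\varphi\Rightarrow\psi}=\bigcup\{\to_A: A\in\Sigma^+,\ \forall w\in[\![\varphi]\!]\,\forall w'(w\to_Aw'\Rightarrow w'\in[\![\psi]\!])\}$. Capabilities: $[\![\mathsf C_\imath a]\!]=\{w:\to_a\subseteq\imath^M(w)\}$, $[\![\mathsf C_\imath\varphi]\!]=W$, $[\![\mathsf C_\imath(\varphi\Rightarrow\psi)]\!]=\{w:\to_{\varphi\Rightarrow\psi}\subseteq\imath^M(w)\}$, $[\![\mathsf C_\imath(AB)]\!]=\{w\in[\![\mathsf C_\imath A]\!]:\forall w'(w\to_Aw'\Rightarrow w'\in[\![\mathsf C_\imath B]\!])\}$, $[\![\mathsf C_\imath(A+B)]\!]=[\![\mathsf C_\imath A]\!]\cap[\![\mathsf C_\imath B]\!]$, $[\![\mathsf C_\imath A^*]\!]=\bigcup\{[\![\varphi]\!]:[\![\varphi]\!]\subseteq[\![\mathsf C_\imath A]\!]\cap[\![\forall A.\varphi]\!]\}$. Normality condition: $\imath^M(w)=\bigcup\{\to_{\varphi\Rightarrow\psi}:w\in[\![\mathsf C_\imath(\varphi\Rightarrow\psi)]\!]\}\cup\bigcup\{\to_a:w\in[\![\mathsf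 C_\imath a]\!]\}$. We write $w\models^M\varphi$ iff $w\in[\![\varphi]\!]$; $\varphi$ is valid if true at every state of every $\mathcal L$-model; $\varphi\equiv\psi$ means $[\![\varphi]\!]=[\![\psi]\!]$ in every $\mathcal L$-model; $\vartheta\models\chi$ means every state of every model satisfying $\vartheta$ satisfies $\chi$. For programs, $A\preceq B$ means $\to_A\subseteq\to_B$ in every $\mathcal L$-model (for a sequence, $A_1A_2\cdots A_n\preceq B$ refers to the composed relation). *)

From Stdlib Require Import Classical.
Set Implicit Arguments.

Section Syntax.
Variables (AtF AtP Ag : Type).

Inductive form : Type :=
  | FAtom : AtF -> form
  | FNeg : form -> form
  | FBox : prog -> form -> form
  | FCap : Ag -> prog -> form
with prog : Type :=
  | PAtom : AtP -> prog
  | PTest : form -> prog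
  | PImp : form -> form -> prog
  | PSeq : prog -> prog -> prog
  | PChoice : prog -> prog -> prog
  | PStar : prog -> prog.

Definition FImpl (phi psi : form) : form := FBox (PTest phi) psi.

Inductive inSigma : prog -> Prop :=
  | sig_atom a : inSigma (PAtom a)
  | sig_test phi : inSigma (PTest phi)
  | sig_imp phi psi : inSigma (PImp phi psi).

Inductive inSigmaT : prog -> Prop :=
  | sigT_atom a : inSigmaT (PAtom a)
  | sigT_imp phi psi : inSigmaT (PImp phi psi).

Inductive inSigmaPlus : prog -> Prop :=
  | sp_base A : inSigma A -> inSigmaPlus A
  | sp_seq A B : inSigmaPlus A -> inSigmaPlus B -> inSigmaPlus (PSeq A B).

Inductive inSigmaTPlus : prog -> Prop :=
  | stp_base A : inSigmaT A -> inSigmaTPlus A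
  | stp_seq A B : inSigmaTPlus A -> inSigmaTPlus B -> inSigmaTPlus (PSeq A B).
End Syntax.

Fixpoint rpow (W : Type) (R : W -> W -> Prop) (n : nat) : W -> W -> Prop :=
  match n with
  | O => fun u v => u = v
  | S n => fun u v => exists m, R u m /\ rpow R n m v
  end.

(* An L-model, together with its interpretation [[.]] / ->_A, which is
   required to satisfy all semantic clauses of the paper (including the
   normality condition). *)
Record model (AtF AtP Ag : Type) : Type := {
  W : Type;
  W_ne : inhabited W;
  R : AtP -> W -> W -> Prop;
  rho : AtF -> W -> Prop;
  cap : Ag -> W -> W -> W -> Prop;
  sem : form AtF AtP Ag -> W -> Prop;
  rel : prog AtF AtP Ag -> W -> W -> Prop;
  cap_sub : forall i w u v, cap i w u v ->
      exists A, inSigmaPlus A /\ rel A u v;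
  sem_atom : forall p w, sem (FAtom _ _ p) w <-> rho p w;
  sem_neg : forall phi w, sem (FNeg phi) w <-> ~ sem phi w;
  sem_box : forall A phi w, sem (FBox A phi) w <->
      (forall w', rel A w w' -> sem phi w');
  rel_atom : forall a u v, rel (PAtom _ _ a) u v <-> R a u v;
  rel_test : forall phi u v, rel (PTest phi) u v <-> (u = v /\ sem phi u);
  rel_seq : forall A B u v, rel (PSeq A B) u v <->
      (exists m, rel A u m /\ rel B m v);
  rel_choice : forall A B u v, rel (PChoice A B) u v <->
      (rel A u v \/ rel B u v);
  rel_star : forall A u v, rel (PStar A) u v <->
      (exists n, rpow (rel A) n u v);
  rel_imp : forall phi psi u v, rel (PImp phi psi) u v <->
      (exists A, inSigmaPlus A /\
         (forall w w', sem phi w -> rel A w w' -> sem psi w') /\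
         rel A u v);
  sem_cap_atom : forall i a w, sem (FCap i (PAtom _ _ a)) w <->
      (forall u v, R a u v -> cap i w u v);
  sem_cap_test : forall i phi w, sem (FCap i (PTest phi)) w <-> True;
  sem_cap_imp : forall i phi psi w, sem (FCap i (PImp phi psi)) w <->
      (forall u v, rel (PImp phi psi) u v -> cap i w u v);
  sem_cap_seq : forall i A B w, sem (FCap i (PSeq A B)) w <->
      (sem (FCap i A) w /\ forall w', rel A w w' -> sem (FCap i B) w');
  sem_cap_choice : forall i A B w, sem (FCap i (PChoice A B)) w <->
      (sem (FCap i A) w /\ sem (FCap i B) w);
  sem_cap_star : forall i A w, sem (FCap i (PStar A)) w <->
      (exists chi, (forall x, sem chi x ->
                      sem (FCap i A) x /\ sem (FBox A chi) x) /\ sem chi w);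
  normality : forall i w u v, cap i w u v <->
      ((exists phi psi, sem (FCap i (PImp phi psi)) w /\
                        rel (PImp phi psi) u v) \/
       (exists a, sem (FCap i (PAtom _ _ a)) w /\ R a u v))
}.

Definition prec (AtF AtP Ag : Type) (A B : prog AtF AtP Ag) : Prop :=
  forall M : model AtF AtP Ag, forall u v, rel M A u v -> rel M B u v.

Definition entails (AtF AtP Ag : Type) (theta chi : form AtF AtP Ag) : Prop :=
  forall M : model AtF AtP Ag, forall w, sem M theta w -> sem M chi w.

Set Implicit Arguments.

(* The relation ->_(phi => psi) of a model is, by definition, the union of
   the relations ->_C over the programs C in Sigma^+ that validate the Hoare
   triple {phi} C {psi}.  Hence a pair (u, v) lies in ->_(phi => psi) as soon
   as it is realised by such a C. *)

Definition hoare (AtF AtP Ag : Type) (M : model AtF AtP Ag)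
    (phi : form AtF AtP Ag) (C : prog AtF AtP Ag) (psi : form AtF AtP Ag) : Prop :=
  forall w w', sem M phi w -> rel M C w w' -> sem M psi w'.

Lemma sigmaT_plus_sigma_plus (AtF AtP Ag : Type) (B : prog AtF AtP Ag) :
  inSigmaTPlus B -> inSigmaPlus B.
Proof.
  induction 1 as [B SB | B1 B2 _ IH1 _ IH2].
  - constructor. destruct SB; constructor.
  - now apply sp_seq.
Qed.

Section Model.
Context {AtF AtP Ag : Type} {M : model AtF AtP Ag}.

Local Notation form := (form AtF AtP Ag).
Local Notation prog := (prog AtF AtP Ag).
Local Notation hoare := (hoare M).

Lemma rel_test_intro {phi : form} {w : W M} :
  sem M phi w -> rel M (PTest phi) w w.
Proof. intros H. apply (proj2 (rel_test M _ _ _)). auto. Qed.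

Lemma rel_seq_intro {A B : prog} {u m v : W M} :
  rel M A u m -> rel M B m v -> rel M (PSeq A B) u v.
Proof. intros HA HB. apply (proj2 (rel_seq M _ _ _ _)). eauto. Qed.

Lemma rel_imp_intro {phi psi : form} {C : prog} {u v : W M} :
  inSigmaPlus C -> hoare phi C psi -> rel M C u v -> rel M (PImp phi psi) u v.
Proof. intros SC HC RC. apply (proj2 (rel_imp M _ _ _ _)). eauto. Qed.

Lemma hoare_imp (phi psi : form) : hoare phi (PImp phi psi) psi.
Proof.
  intros w w' Hw Hr.
  destruct (proj1 (rel_imp M _ _ _ _) Hr) as [C [_ [HC RC]]].
  exact (HC _ _ Hw RC).
Qed.

Lemma sem_impl_refl (phi : form) (w : W M) : sem M (FImpl phi phi) w.
Proof.
  apply (proj2 (sem_box M _ _ _)). intros w' Hr.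
  destruct (proj1 (rel_test M _ _ _) Hr) as [<- H]. exact H.
Qed.

(* Covering lemma: every A-step is realised by some program of Sigma^+.
   The formula chi only serves to build the tautological test chi -> chi
   realising the empty iteration of a star. *)
Lemma sigma_plus_cover (chi : form) {A : prog} {u v : W M} :
  rel M A u v -> exists C, inSigmaPlus C /\ rel M C u v.
Proof.
  revert u v.
  induction A as [a|f|f g|A1 IH1 A2 IH2|A1 IH1 A2 IH2|A1 IH1]; intros u v H.
  - exists (PAtom _ _ a). split; [do 2 constructor | exact H].
  - exists (PTest f). split; [do 2 constructor | exact H].
  - exists (PImp f g). split; [do 2 constructor | exact H].
  - destruct (proj1 (rel_seq M _ _ _ _) H) as [m [H1 H2]].
    destruct (IH1 _ _ H1) as [C1 [S1 R1]], (IH2 _ _ H2) as [C2 [S2 R2]].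
    exists (PSeq C1 C2). split; [now apply sp_seq | eapply rel_seq_intro; eauto].
  - destruct (proj1 (rel_choice M _ _ _ _) H) as [H' | H']; eauto.
  - destruct (proj1 (rel_star M _ _ _) H) as [n Hn]. clear H.
    revert u v Hn. induction n as [|n IHn]; intros u v Hn; simpl in Hn.
    + subst v. exists (PTest (FImpl chi chi)).
      split; [do 2 constructor | apply rel_test_intro, sem_impl_refl].
    + destruct Hn as [m [H1 H2]].
      destruct (IH1 _ _ H1) as [C1 [S1 R1]], (IHn _ _ H2) as [C2 [S2 R2]].
      exists (PSeq C1 C2). split; [now apply sp_seq | eapply rel_seq_intro; eauto].
Qed.

Lemma hoare_neg_test_seq (phi psi : form) (C : prog) :
  hoare phi (PSeq (PTest (FNeg phi)) C) psi.
Proof.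
  intros w w' Hw Hr.
  destruct (proj1 (rel_seq M _ _ _ _) Hr) as [m [Ht _]].
  destruct (proj1 (rel_test M _ _ _) Ht) as [_ Hn].
  exact (False_ind _ (proj1 (sem_neg M _ _) Hn Hw)).
Qed.

Lemma hoare_neg_test (phi psi : form) : hoare phi (PTest (FNeg phi)) psi.
Proof.
  intros w w' Hw Hr. destruct (proj1 (rel_test M _ _ _) Hr) as [_ Hn].
  exact (False_ind _ (proj1 (sem_neg M _ _) Hn Hw)).
Qed.

Lemma hoare_seq_test (phi psi : form) (C : prog) :
  hoare phi (PSeq C (PTest psi)) psi.
Proof.
  intros w w' _ Hr.
  destruct (proj1 (rel_seq M _ _ _ _) Hr) as [m [_ Ht]].
  now destruct (proj1 (rel_test M _ _ _) Ht) as [<- Hp].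
Qed.

Lemma hoare_test_post (phi psi : form) : hoare phi (PTest psi) psi.
Proof.
  intros w w' _ Hr. now destruct (proj1 (rel_test M _ _ _) Hr) as [<- Hp].
Qed.

Lemma hoare_test_iff (phi psi theta : form) :
  hoare phi (PTest theta) psi <->
  (forall w, sem M theta w -> sem M (FImpl phi psi) w).
Proof.
  split.
  - intros HT w Hw. apply (proj2 (sem_box M _ _ _)). intros w' Hr.
    destruct (proj1 (rel_test M _ _ _) Hr) as [<- Hphi].
    exact (HT w w Hphi (rel_test_intro Hw)).
  - intros HI w w' Hphi Hr. destruct (proj1 (rel_test M _ _ _) Hr) as [<- Hth].
    exact (proj1 (sem_box M _ _ _) (HI w Hth) w (rel_test_intro Hphi)).
Qed.

Lemma hoare_test_impl (phi psi : form) : hoare phi (PTest (FImpl phi psi)) psi.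
Proof. apply hoare_test_iff. auto. Qed.

(* Decomposition of ->_(phi => psi): its test part phi -> psi, together with
   the steps of tilde-Sigma^+ programs validating {phi} B {psi}; the
   relation ->_(phi => psi) itself is one of the latter. *)
Lemma rel_imp_decomposition (phi psi : form) (u v : W M) :
  rel M (PImp phi psi) u v <->
  (rel M (PTest (FImpl phi psi)) u v \/
   exists B, inSigmaTPlus B /\
     (forall w w', rel M B w w' -> sem M phi w -> sem M psi w') /\
     rel M B u v).
Proof.
  split.
  - intros H. right. exists (PImp phi psi).
    split; [do 2 constructor |]. split; [| exact H].
    intros w w' Hr Hw. exact (hoare_imp phi psi w w' Hw Hr).
  - intros [H | [B [SB [HB RB]]]].
    + exact (rel_imp_intro (sp_base (sig_test _)) (hoare_test_impl phi psi) H).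
    + apply (rel_imp_intro (sigmaT_plus_sigma_plus SB)); [| exact RB].
      intros w w' Hw Hr. exact (HB w w' Hr Hw).
Qed.
End Model.

Section Refinement.
Context {AtF AtP Ag : Type}.

Local Notation form := (form AtF AtP Ag).
Local Notation prog := (prog AtF AtP Ag).

Lemma prec_imp_of_hoare (phi psi : form) (C : prog) :
  inSigmaPlus C -> (forall M, hoare M phi C psi) -> prec C (PImp phi psi).
Proof. intros SC HC M u v. exact (rel_imp_intro SC (HC M)). Qed.

(* (~phi) A <= phi => psi: realise the A-step by a Sigma^+ program C and
   use the triple {phi} (~phi) C {psi}. *)
Lemma prec_neg_test_seq (phi psi : form) (A : prog) :
  prec (PSeq (PTest (FNeg phi)) A) (PImp phi psi).
Proof.
  intros M u v H.
  destruct (proj1 (rel_seq M _ _ _ _) H) as [m [Ht HA]].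
  destruct (proj1 (rel_test M _ _ _) Ht) as [<- Hn].
  destruct (sigma_plus_cover phi HA) as [C [SC RC]].
  apply (rel_imp_intro (C := PSeq (PTest (FNeg phi)) C)).
  - apply sp_seq; [do 2 constructor | exact SC].
  - apply hoare_neg_test_seq.
  - exact (rel_seq_intro (rel_test_intro Hn) RC).
Qed.

(* A psi <= phi => psi, symmetrically with the triple {phi} C psi {psi}. *)
Lemma prec_seq_test (phi psi : form) (A : prog) :
  prec (PSeq A (PTest psi)) (PImp phi psi).
Proof.
  intros M u v H.
  destruct (proj1 (rel_seq M _ _ _ _) H) as [m [HA Ht]].
  destruct (proj1 (rel_test M _ _ _) Ht) as [<- Hp].
  destruct (sigma_plus_cover phi HA) as [C [SC RC]].
  apply (rel_imp_intro (C := PSeq C (PTest psi))).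
  - apply sp_seq; [exact SC | do 2 constructor].
  - apply hoare_seq_test.
  - exact (rel_seq_intro RC (rel_test_intro Hp)).
Qed.

Lemma test_prec_imp_iff (phi psi theta : form) :
  prec (PTest theta) (PImp phi psi) <-> entails theta (FImpl phi psi).
Proof.
  split.
  - intros Hp M. apply hoare_test_iff. intros w w' Hw Hr.
    exact (hoare_imp phi psi w w' Hw (Hp M _ _ Hr)).
  - intros He. apply prec_imp_of_hoare; [do 2 constructor |].
    intros M. apply hoare_test_iff, He.
Qed.
End Refinement.

Theorem mainTheorem2 (AtF AtP Ag : Type) :
  forall (phi psi theta : form AtF AtP Ag) (A : prog AtF AtP Ag),
  (* (1) *)
  (prec (PSeq (PTest (FNeg phi)) A) (PImp phi psi) /\
   prec (PSeq A (PTest psi)) (PImp phi psi) /\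
   prec (PTest (FNeg phi)) (PImp phi psi) /\
   prec (PTest psi) (PImp phi psi) /\
   prec (PTest (FImpl phi psi)) (PImp phi psi)) /\
  (* (2) *)
  ((prec (PTest theta) (PImp phi psi) <-> entails theta (FImpl phi psi)) /\
   (forall (M : model AtF AtP Ag) u v,
      rel M (PImp phi psi) u v <->
      (rel M (PTest (FImpl phi psi)) u v \/
       exists B, inSigmaTPlus B /\
         (forall w w', rel M B w w' -> sem M phi w -> sem M psi w') /\
         rel M B u v))).
Proof.
  intros phi psi theta A.
  assert (test_prec : forall chi, (forall M, hoare M phi (PTest chi) psi) ->
                      prec (PTest chi) (PImp phi psi)).
  { intros chi H. exact (prec_imp_of_hoare (sp_base (sig_test _)) H). }
  split; [repeat split | split].
  - apply prec_neg_test_seq.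
  - apply prec_seq_test.
  - apply test_prec. intros M. apply hoare_neg_test.
  - apply test_prec. intros M. apply hoare_test_post.
  - apply test_prec. intros M. apply hoare_test_impl.
  - apply test_prec_imp_iff.
  - intros M u v. apply rel_imp_decomposition.
Qed.
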